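(* Let $$A= \begin{pmatrix} 1& -2& 2\\ 2&-1& 2\\ 2&-2& 3 \end{pmatrix},\quad B= \begin{pmatrix} 1& 2& 2\\ 2&1& 2\\ 2&2& 3 \end{pmatrix},\quad C= \begin{pmatrix} -1& 2& 2\\ -2&1& 2\\ -2&2& 3 \end{pmatrix},$$ and let $P=(x,y,z)$ be a primitive Pythagorean triple. Then the triangle in $\mathbb{R}^3$ with vertices $AP^\top$, $BP^\top$, $CP^\top$ has inradius $$r= \frac{2xy\sqrt{17}}{3x+3y+\sqrt{9x^2-16xy+9y^2}}$$ and circumradius $$R=\frac{9\sqrt{9x^2-16xy+9y^2}}{\sqrt{17}}.$$
   Context: A primitive Pythagorean triple is a triple $(x,y,z)$ of positive integers with $x^2+y^2=z^2$, $\gcd(x,y)=1$ and $x$ odd. Triples are regarded as row vectors and $\top$ denotes transpose; $\mathbb{R}^3$ carries the Euclidean metric. *)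

From HB Require Import structures.
From mathcomp Require Import all_boot all_order all_algebra.
From mathcomp Require Import reals.
Set Implicit Arguments. Unset Strict Implicit. Unset Printing Implicit Defensive.
Import Order.TTheory GRing.Theory Num.Theory.
Local Open Scope ring_scope.

Definition mx3 (r : seq (seq int)) : 'M[int]_3 :=
  \matrix_(i < 3, j < 3) nth 0 (nth [::] r i) j.

Definition matA : 'M[int]_3 := mx3 [:: [:: 1; -2; 2]; [:: 2; -1; 2]; [:: 2; -2; 3]].
Definition matB : 'M[int]_3 := mx3 [:: [:: 1; 2; 2]; [:: 2; 1; 2]; [:: 2; 2; 3]].
Definition matC : 'M[int]_3 := mx3 [:: [:: -1; 2; 2]; [:: -2; 1; 2]; [:: -2; 2; 3]].

Definition triple_row (x y z : nat) : 'rV[int]_3 :=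
  \row_(j < 3) nth 0 [:: x%:Z; y%:Z; z%:Z] j.

Definition primitive_pythagorean (x y z : nat) : Prop :=
  [/\ [/\ (0 < x)%N, (0 < y)%N & (0 < z)%N],
      (x ^ 2 + y ^ 2 = z ^ 2)%N, gcdn x y = 1%N & odd x].

Definition vertex (R : realType) (M : 'M[int]_3) (x y z : nat) : 'cV[R]_3 :=
  map_mx (fun k : int => k%:~R) (M *m (triple_row x y z)^T).

Definition dotv (R : realType) (u v : 'cV[R]_3) : R := \sum_(i < 3) u i 0 * v i 0.
Definition normv (R : realType) (u : 'cV[R]_3) : R := Num.sqrt (dotv u u).

(* d is the (Euclidean) distance from p to the line through u and v:
   q is the foot of the perpendicular from p to that line. *)
Definition dist_to_line (R : realType) (p u v : 'cV[R]_3) (d : R) : Prop :=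
  exists t : R, let q := u + t *: (v - u) in
    dotv (p - q) (v - u) = 0 /\ normv (p - q) = d.

(* Circumradius: radius of the circle in the plane of the triangle through
   the three vertices (its center O lies in the affine plane of a, b, c). *)
Definition is_circumradius (R : realType) (a b c : 'cV[R]_3) (rad : R) : Prop :=
  exists s t : R, let O := a + s *: (b - a) + t *: (c - a) in
    [/\ normv (O - a) = rad, normv (O - b) = rad & normv (O - c) = rad].

(* Inradius: radius of the circle inscribed in the triangle: its center I is
   an interior point of the triangle equidistant (distance rad) from the three
   side lines. *)
Definition is_inradius (R : realType) (a b c : 'cV[R]_3) (rad : R) : Prop :=
  exists la lb lc : R,
    [/\ 0 < la, 0 < lb, 0 < lc, la + lb + lc = 1 &
      let I := la *: a + lb *: b + lc *: c in
      [/\ dist_to_line I a b rad, dist_to_line I b c rad & dist_to_line I c a rad]].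

From HB Require Import structures.
From mathcomp Require Import all_boot all_order all_algebra.
From mathcomp Require Import reals ring lra.
Import Order.TTheory GRing.Theory Num.Theory.
Local Open Scope ring_scope.

(* The vertices differ by (B - A) P^T = y (4,2,4)^T and (C - B) P^T = -x (2,4,4)^T, so the
   triangle is a translate of one depending only on x and y, with sides |BC| = 6x,
   |CA| = 2 sqrt(9x^2 - 16xy + 9y^2) and |AB| = 6y; neither z nor the Pythagorean relation
   plays any role.  The radii then come from formulas valid for every triangle in R^3 with
   sides a, b, c: the incentre is the barycentre with weights a, b, c and
   r^2 (a + b + c)^2 = 4 area^2, the circumcentre has barycentric weights a^2 (b^2 + c^2 - a^2),
   b^2 (c^2 + a^2 - b^2), c^2 (a^2 + b^2 - c^2), and 16 R^2 area^2 = a^2 b^2 c^2.  By the law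
   of cosines every inner product is a function of the squared sides, so each of these
   formulas reduces to a rational identity.  Here 16 area^2 = 1088 x^2 y^2. *)

Lemma big_ord3 (V : nmodType) (F : 'I_3 -> V) : \sum_(i < 3) F i = F 0 + F 1 + F 2.
Proof.
by rewrite !big_ord_recl big_ord0 addr0 addrA; congr (F _ + F _ + F _); apply/val_inj.
Qed.

(* Heron: [heron (a^2) (b^2) (c^2)] is 16 times the squared area of a triangle with sides a, b, c. *)
Definition heron {R : nzRingType} (p q r : R) : R :=
  2 * p * q + 2 * q * r + 2 * r * p - p ^+ 2 - q ^+ 2 - r ^+ 2.

Lemma heron_rot (R : comNzRingType) (p q r : R) : heron q r p = heron p q r.
Proof. by rewrite /heron; ring. Qed.

Section Euclid.
Variable R : realType.
Implicit Types (a b c p u v w : 'cV[R]_3) (d k : R).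

Lemma dotvE u v : dotv u v = u 0 0 * v 0 0 + u 1 0 * v 1 0 + u 2 0 * v 2 0.
Proof. exact: big_ord3. Qed.

Lemma dotvC u v : dotv u v = dotv v u.
Proof. by rewrite !dotvE; ring. Qed.

Lemma dotvDl u v w : dotv (u + v) w = dotv u w + dotv v w.
Proof. by rewrite !dotvE !mxE; ring. Qed.

Lemma dotvNl u v : dotv (- u) v = - dotv u v.
Proof. by rewrite !dotvE !mxE; ring. Qed.

Lemma dotvZl k u v : dotv (k *: u) v = k * dotv u v.
Proof. by rewrite !dotvE !mxE; ring. Qed.

Lemma dotvDr u v w : dotv u (v + w) = dotv u v + dotv u w.
Proof. by rewrite dotvC dotvDl !(dotvC u). Qed.

Lemma dotvNr u v : dotv u (- v) = - dotv u v.
Proof. by rewrite dotvC dotvNl dotvC. Qed.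

Lemma dotvZr k u v : dotv u (k *: v) = k * dotv u v.
Proof. by rewrite dotvC dotvZl dotvC. Qed.

Definition dotv_bilin := (dotvDl, dotvDr, dotvNl, dotvNr, dotvZl, dotvZr).

Lemma dotv_subC a b : dotv (a - b) (a - b) = dotv (b - a) (b - a).
Proof. by rewrite -opprB dotvNl dotvNr opprK. Qed.

Lemma dotv_law_of_cosines a b c :
  2 * dotv (b - a) (c - a) = dotv (b - a) (b - a) + dotv (c - a) (c - a) - dotv (b - c) (b - c).
Proof. by rewrite !dotvE !mxE; ring. Qed.

Lemma normv_eq w d : 0 <= d -> dotv w w = d ^+ 2 -> normv w = d.
Proof. by move=> d_ge0 wd; rewrite /normv wd sqrtr_sqr ger0_norm. Qed.

Lemma dist_to_line_sqr p u v d :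
  dotv (v - u) (v - u) != 0 -> 0 <= d ->
  dotv (p - u) (p - u) * dotv (v - u) (v - u) - dotv (p - u) (v - u) ^+ 2
    = d ^+ 2 * dotv (v - u) (v - u) ->
  dist_to_line p u v d.
Proof.
move=> e_neq0 d_ge0 pd; exists (dotv (p - u) (v - u) / dotv (v - u) (v - u)) => /=.
set e := v - u in e_neq0 pd *; set w := p - u in pd *.
have -> : p - (u + dotv w e / dotv e e *: e) = w - dotv w e / dotv e e *: e.
  by rewrite opprD addrA.
clearbody e w; split; last apply: normv_eq => //; rewrite !dotv_bilin.
  by field.
by rewrite -(mulfK e_neq0 (d ^+ 2)) -pd [dotv e w]dotvC; field.
Qed.

Lemma gram_of_sides {a b c sa sb sc} :
  dotv (b - c) (b - c) = sa ^+ 2 -> dotv (c - a) (c - a) = sb ^+ 2 ->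
  dotv (a - b) (a - b) = sc ^+ 2 ->
  [/\ dotv (b - a) (b - a) = sc ^+ 2, dotv (c - a) (c - a) = sb ^+ 2
    & dotv (b - a) (c - a) = (sb ^+ 2 + sc ^+ 2 - sa ^+ 2) / 2].
Proof.
move=> bc ca ab; rewrite -dotv_subC ab; split=> //.
have := dotv_law_of_cosines a b c; rewrite -[dotv (b - a) (b - a)]dotv_subC ab ca bc; lra.
Qed.

Definition incenter a b c (sa sb sc : R) : 'cV[R]_3 :=
  let P := sa + sb + sc in (sa / P) *: a + (sb / P) *: b + (sc / P) *: c.

Lemma incenter_rot a b c sa sb sc : incenter b c a sb sc sa = incenter a b c sa sb sc.
Proof.
rewrite /incenter; have -> : sb + sc + sa = sa + sb + sc by ring.
by rewrite addrC addrA.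
Qed.

Section Incircle.
Variables (a b c : 'cV[R]_3) (sa sb sc r : R).
Hypotheses (sa_gt0 : 0 < sa) (sb_gt0 : 0 < sb) (sc_gt0 : 0 < sc).
Hypotheses (bc : dotv (b - c) (b - c) = sa ^+ 2) (ca : dotv (c - a) (c - a) = sb ^+ 2)
  (ab : dotv (a - b) (a - b) = sc ^+ 2).
Hypotheses (r_ge0 : 0 <= r)
  (r_heron : 4 * r ^+ 2 * (sa + sb + sc) ^+ 2 = heron (sa ^+ 2) (sb ^+ 2) (sc ^+ 2)).

Lemma dist_incenter_side : dist_to_line (incenter a b c sa sb sc) a b r.
Proof.
have P_neq0 : sa + sb + sc != 0 by rewrite gt_eqF // !addr_gt0.
have [uu vv uv] := gram_of_sides bc ca ab.
apply: dist_to_line_sqr => //; first by rewrite uu expf_neq0 // gt_eqF.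
have -> : incenter a b c sa sb sc - a
    = (sb / (sa + sb + sc)) *: (b - a) + (sc / (sa + sb + sc)) *: (c - a).
  by apply/matrixP=> i j; rewrite !mxE; field.
move: (b - a) (c - a) uu vv uv => u v uu vv uv.
rewrite !dotv_bilin [dotv v u]dotvC uu vv uv.
have -> : r ^+ 2 = heron (sa ^+ 2) (sb ^+ 2) (sc ^+ 2) / (4 * (sa + sb + sc) ^+ 2).
  by rewrite -r_heron; field.
by rewrite /heron; field.
Qed.

End Incircle.

Lemma is_inradius_heron a b c sa sb sc r :
  0 < sa -> 0 < sb -> 0 < sc ->
  dotv (b - c) (b - c) = sa ^+ 2 -> dotv (c - a) (c - a) = sb ^+ 2 ->
  dotv (a - b) (a - b) = sc ^+ 2 -> 0 <= r ->
  4 * r ^+ 2 * (sa + sb + sc) ^+ 2 = heron (sa ^+ 2) (sb ^+ 2) (sc ^+ 2) ->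
  is_inradius a b c r.
Proof.
move=> sa_gt0 sb_gt0 sc_gt0 bc ca ab r_ge0 r_heron.
have P_gt0 : 0 < sa + sb + sc by rewrite !addr_gt0.
exists (sa / (sa + sb + sc)), (sb / (sa + sb + sc)), (sc / (sa + sb + sc)).
split; rewrite ?divr_gt0 //; first by field; rewrite gt_eqF.
have r_heron' : 4 * r ^+ 2 * (sb + sc + sa) ^+ 2 = heron (sb ^+ 2) (sc ^+ 2) (sa ^+ 2).
  by rewrite heron_rot -r_heron; ring.
have r_heron'' : 4 * r ^+ 2 * (sc + sa + sb) ^+ 2 = heron (sc ^+ 2) (sa ^+ 2) (sb ^+ 2).
  by rewrite heron_rot heron_rot -r_heron; ring.
split; first exact: dist_incenter_side.
  by have := dist_incenter_side b c a sb sc sa r; rewrite incenter_rot; apply.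
by have := dist_incenter_side c a b sc sa sb r; rewrite -incenter_rot; apply.
Qed.

Lemma is_circumradius_heron a b c sa sb sc rho :
  dotv (b - c) (b - c) = sa ^+ 2 -> dotv (c - a) (c - a) = sb ^+ 2 ->
  dotv (a - b) (a - b) = sc ^+ 2 ->
  heron (sa ^+ 2) (sb ^+ 2) (sc ^+ 2) != 0 -> 0 <= rho ->
  rho ^+ 2 * heron (sa ^+ 2) (sb ^+ 2) (sc ^+ 2) = sa ^+ 2 * sb ^+ 2 * sc ^+ 2 ->
  is_circumradius a b c rho.
Proof.
set H := heron _ _ _ => bc ca ab H_neq0 rho_ge0 rho_heron.
have [uu vv uv] := gram_of_sides bc ca ab.
have rhoE : rho ^+ 2 = sa ^+ 2 * sb ^+ 2 * sc ^+ 2 / H by rewrite -rho_heron mulfK.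
(* The weights of b and c among the barycentric coordinates of the circumcentre. *)
set s := sb ^+ 2 * (sa ^+ 2 + sc ^+ 2 - sb ^+ 2) / H.
set t := sc ^+ 2 * (sa ^+ 2 + sb ^+ 2 - sc ^+ 2) / H.
exists s, t => /=.
have -> : a + s *: (b - a) + t *: (c - a) - a = s *: (b - a) + t *: (c - a).
  by apply/matrixP=> i j; rewrite !mxE; ring.
have -> : a + s *: (b - a) + t *: (c - a) - b = (s - 1) *: (b - a) + t *: (c - a).
  by apply/matrixP=> i j; rewrite !mxE; ring.
have -> : a + s *: (b - a) + t *: (c - a) - c = s *: (b - a) + (t - 1) *: (c - a).
  by apply/matrixP=> i j; rewrite !mxE; ring.
move: (b - a) (c - a) uu vv uv => u v uu vv uv.
by split; apply: normv_eq => //;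
  rewrite !dotv_bilin [dotv v u]dotvC uu vv uv rhoE /s /t /H /heron; field.
Qed.

End Euclid.

Lemma vertexE (R : realType) (M : 'M[int]_3) (x y z : nat) :
  vertex R M x y z
    = \col_i ((M i 0)%:~R * x%:R + (M i 1)%:~R * y%:R + (M i 2)%:~R * z%:R).
Proof. by apply/matrixP=> i j; rewrite !mxE big_ord3 !mxE /= !rmorphD !rmorphM. Qed.

Lemma vertex_triangle_sides (R : realType) (x y z : nat) :
  let a := vertex R matA x y z in
  let b := vertex R matB x y z in
  let c := vertex R matC x y z in
  let X : R := x%:R in
  let Y : R := y%:R in
  [/\ dotv (b - c) (b - c) = (6 * X) ^+ 2,
      dotv (c - a) (c - a) = 4 * (9 * X ^+ 2 - 16 * X * Y + 9 * Y ^+ 2)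
    & dotv (a - b) (a - b) = (6 * Y) ^+ 2].
Proof. by rewrite /= !vertexE !dotvE !mxE /=; split; ring. Qed.

Theorem mainTheorem14 (R : realType) (x y z : nat) :
  primitive_pythagorean x y z ->
  let a : 'cV[R]_3 := vertex R matA x y z in
  let b : 'cV[R]_3 := vertex R matB x y z in
  let c : 'cV[R]_3 := vertex R matC x y z in
  let X : R := x%:R in
  let Y : R := y%:R in
  let D : R := Num.sqrt (9 * X ^+ 2 - 16 * X * Y + 9 * Y ^+ 2) in
  is_inradius a b c (2 * X * Y * Num.sqrt 17 / (3 * X + 3 * Y + D)) /\
  is_circumradius a b c (9 * D / Num.sqrt 17).
Proof.
case=> [[x_gt0 y_gt0 _] _ _ _] a b c X Y D.
have X_gt0 : 0 < X by rewrite ltr0n.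
have Y_gt0 : 0 < Y by rewrite ltr0n.
have Q_gt0 : 0 < 9 * X ^+ 2 - 16 * X * Y + 9 * Y ^+ 2.
  have -> : 9 * X ^+ 2 - 16 * X * Y + 9 * Y ^+ 2 = 9 * (X - Y) ^+ 2 + 2 * (X * Y) by ring.
  by have := sqr_ge0 (X - Y); have := mulr_gt0 X_gt0 Y_gt0; lra.
have D_gt0 : 0 < D by rewrite sqrtr_gt0.
have DE : D ^+ 2 = 9 * X ^+ 2 - 16 * X * Y + 9 * Y ^+ 2 by rewrite sqr_sqrtr // ltW.
have sqrt17E : Num.sqrt 17 ^+ 2 = 17 :> R by rewrite sqr_sqrtr.
have sqrt17_gt0 : 0 < Num.sqrt 17 :> R by rewrite sqrtr_gt0.
have [bc ca ab] := vertex_triangle_sides R x y z.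
have {}ca : dotv (c - a) (c - a) = (2 * D) ^+ 2 by rewrite ca -/X -/Y -DE; ring.
have heronE : heron ((6 * X) ^+ 2) ((2 * D) ^+ 2) ((6 * Y) ^+ 2) = 1088 * X ^+ 2 * Y ^+ 2.
  by rewrite /heron !exprMn DE; ring.
split.
- apply: (is_inradius_heron R a b c (6 * X) (2 * D) (6 * Y)) => //; rewrite ?mulr_gt0 //.
    by apply/ltW/divr_gt0; [rewrite !mulr_gt0 | lra].
  rewrite heronE expr_div_n !exprMn sqrt17E; field.
  by rewrite gt_eqF //; lra.
- apply: (is_circumradius_heron R a b c (6 * X) (2 * D) (6 * Y)) => //; rewrite ?heronE.
  + by rewrite gt_eqF // !mulr_gt0 // exprn_gt0.
  + by apply/ltW/divr_gt0; rewrite ?mulr_gt0.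
  + by rewrite expr_div_n !exprMn sqrt17E DE; field.
Qed.
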